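(* Let $\alpha\in(1,\infty)$, let $p_X$ be a distribution on a finite set $\mathcal X$ and $p_{Y\mid X}$ a channel to a finite set $\mathcal Y$, and define for channels $\tilde q_{Y\mid X}$ and reverse channels $r_{X\mid Y}$ $$\tilde F_\alpha^{\mathrm C}(\tilde q_{Y\mid X},r_{X\mid Y}):=\frac{\alpha}{1-\alpha}D(p_X\tilde q_{Y\mid X}\|p_Xp_{Y\mid X})+\mathbb E^{p_X\tilde q_{Y\mid X}}\!\left[\log\frac{r_{X\mid Y}(X\mid Y)}{p_X(X)}\right].$$ Then: (1) for fixed $\tilde q_{Y\mid X}$, $r_{X\mid Y}\mapsto\tilde F_\alpha^{\mathrm C}(\tilde q_{Y\mid X},r_{X\mid Y})$ is maximized by $r^*_{X\mid Y}(x\mid y)=\frac{p_X(x)\tilde q_{Y\mid X}(y\mid x)}{\sum_{x'}p_X(x')\tilde q_{Y\mid X}(y\mid x')}$; (2) for fixed $r_{X\mid Y}$, $\tilde q_{Y\mid X}\mapsto\tilde F_\alpha^{\mathrm C}(\tilde q_{Y\mid X},r_{X\mid Y})$ is maximized by $\tilde q^*_{Y\mid X}(y\mid x)=\frac{p_{Y\mid X}(y\mid x)r_{X\mid Y}(x\mid y)^{1-1/\alpha}}{\sum_{y'}p_{Y\mid X}(y'\mid x)r_{X\mid Y}(x\mid y')^{1-1/\alpha}}$.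
   Context: $\log$ is natural; $D$ is the Kullback–Leibler divergence. A channel $\tilde q_{Y\mid X}$ is a family $\{\tilde q_{Y\mid X}(\cdot\mid x)\}_{x\in\mathcal X}$ of distributions on $\mathcal Y$; a reverse channel $r_{X\mid Y}$ is a family $\{r_{X\mid Y}(\cdot\mid y)\}_{y\in\mathcal Y}$ of distributions on $\mathcal X$. $p_X\tilde q_{Y\mid X}$ denotes the joint distribution $p_X(x)\tilde q_{Y\mid X}(y\mid x)$. *)

From HB Require Import structures.
From mathcomp Require Import all_boot all_order all_algebra.
From mathcomp Require Import boolp reals ereal exp.
Set Implicit Arguments. Unset Strict Implicit. Unset Printing Implicit Defensive.
Import Order.TTheory GRing.Theory Num.Theory.
Local Open Scope ring_scope.

Section Defs.
Variable R : realType.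

Definition is_dist (T : finType) (p : T -> R) : Prop :=
  (forall t, 0 <= p t) /\ \sum_(t : T) p t = 1.

Definition is_channel (X Y : finType) (q : X -> Y -> R) : Prop :=
  forall x, is_dist (q x).

(* reverse channel r : Y -> X -> R, r y x = r_{X|Y}(x|y) *)
Definition is_rev_channel (X Y : finType) (r : Y -> X -> R) : Prop :=
  forall y, is_dist (r y).

(* KL divergence (natural log), with 0 log 0 = 0 and D = +oo when P is not
   absolutely continuous w.r.t. Q *)
Definition KL (T : finType) (P Q : T -> R) : \bar R :=
  if `[< exists t, 0 < P t /\ Q t = 0 >] then +oo%E
  else (\sum_(t : T | 0 < P t) P t * ln (P t / Q t))%:E.

(* E^{P}[ f ] for a log-type integrand given as f = ln g : terms with P = 0 are
   omitted; it is -oo if g vanishes somewhere on the support of P. *)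
Definition Elog (T : finType) (P g : T -> R) : \bar R :=
  if `[< exists t, 0 < P t /\ g t = 0 >] then -oo%E
  else (\sum_(t : T | 0 < P t) P t * ln (g t))%:E.

Definition FC (X Y : finType) (alpha : R) (pX : X -> R) (pYX : X -> Y -> R)
  (q : X -> Y -> R) (r : Y -> X -> R) : \bar R :=
  let joint := fun xy : X * Y => pX xy.1 * q xy.1 xy.2 in
  let ref := fun xy : X * Y => pX xy.1 * pYX xy.1 xy.2 in
  let ratio := fun xy : X * Y => r xy.2 xy.1 / pX xy.1 in
  ((alpha / (1 - alpha))%:E * KL joint ref + Elog joint ratio)%E.

End Defs.

(* Both optimizations reduce to Gibbs' inequality
     sum_{P > 0} P ln (Q / P) <= sum Q - sum P.
   Unless p_X q is absolutely continuous w.r.t. p_X p_{Y|X} and r > 0 on its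
   support, the functional is -oo (the KL coefficient alpha/(1-alpha) is
   negative); otherwise it is a finite sum over the support of p_X q.
   (1) F(q, rstar) - F(q, r) = - sum p_X q ln (q_Y r / (p_X q)), where q_Y is the
   output marginal of p_X q, and sum_{x,y} q_Y(y) r(x|y) = 1.
   (2) With c = alpha/(alpha-1) and Z(x) = sum_y p(y|x) r(x|y)^(1-1/alpha),
   the identity c (1 - 1/alpha) = 1 rewrites the integrand at (x, y) as
   c ln (qstar(y|x) / q(y|x)) + c ln Z(x) - ln p_X(x); the second part sums to
   the same value for q and for qstar, and the first is <= 0 by Gibbs with
   P = p_X q, Q = p_X qstar, vanishing at q = qstar. *)

From HB Require Import structures.
From mathcomp Require Import all_boot all_order all_algebra.
From mathcomp Require Import boolp reals ereal exp.
From mathcomp Require Import ring lra.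
Import Order.TTheory GRing.Theory Num.Theory.
Set Implicit Arguments. Unset Strict Implicit. Unset Printing Implicit Defensive.
Local Open Scope ring_scope.

Section LogFacts.
Variable R : realType.

Lemma nneg_mulr_gt0 (a b : R) :
  0 <= a -> 0 <= b -> (0 < a * b) = (0 < a) && (0 < b).
Proof. by move=> a0 b0; rewrite !lt0r mulf_eq0 negb_or mulr_ge0 // a0 b0 !andbT. Qed.

Lemma ln_le_subr1 (x : R) : 0 < x -> ln x <= x - 1.
Proof.
by move=> x0; have := @le_ln1Dx R (x - 1); rewrite (addrC 1) subrK; apply; lra.
Qed.

Lemma mulr_ln_le (p q : R) : 0 < p -> 0 < q -> p * ln (q / p) <= q - p.
Proof.
move=> p0 q0; have := ler_wpM2l (ltW p0) (ln_le_subr1 (divr_gt0 q0 p0)).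
by rewrite mulrBr mulr1 mulrCA divff ?mulr1 // gt_eqF.
Qed.

Lemma sum_support (T : finType) (P F : T -> R) : (forall t, 0 <= P t) ->
  \sum_(t | 0 < P t) P t * F t = \sum_t P t * F t.
Proof.
move=> P0; rewrite [RHS](bigID (fun t => 0 < P t)) /= [X in _ + X]big1 ?addr0 //.
by move=> t; rewrite lt0r P0 andbT negbK => /eqP ->; rewrite mul0r.
Qed.

Lemma ler_sum_term (T : finType) (F : T -> R) (i : T) :
  (forall t, 0 <= F t) -> F i <= \sum_t F t.
Proof. by move=> F0; rewrite (bigD1 i) //= lerDl sumr_ge0. Qed.

Lemma tilted_log_ratio (alpha p q w s Z : R) :
  1 < alpha -> 0 < p -> 0 < q -> 0 < w -> 0 < s -> 0 < Z ->
  alpha / (1 - alpha) * ln (p * q / (p * w)) + ln (s / p) =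
  alpha / (alpha - 1) *
    (ln (p * (w * powR s (1 - alpha^-1) / Z) / (p * q)) + ln Z) - ln p.
Proof.
move=> a1 p0 q0 w0 s0 Z0.
have ? : alpha != 0 by rewrite gt_eqF // (lt_trans ltr01).
have ? : 1 - alpha != 0 by rewrite subr_eq0 lt_eqF.
have ? : alpha - 1 != 0 by rewrite subr_eq0 gt_eqF.
rewrite !ln_div ?lnM ?lnV ?ln_powR ?posrE ?mulr_gt0 ?divr_gt0 ?invr_gt0 ?powR_gt0 //.
by field; apply/and3P.
Qed.

Lemma gibbs (T : finType) (P Q : T -> R) :
  (forall t, 0 <= P t) -> (forall t, 0 <= Q t) ->
  (forall t, 0 < P t -> 0 < Q t) ->
  \sum_(t | 0 < P t) P t * ln (Q t / P t) <= \sum_t Q t - \sum_t P t.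
Proof.
move=> P0 Q0 PQ; apply: le_trans (_ : \sum_(t | 0 < P t) (Q t - P t) <= _).
  by apply: ler_sum => t Pt; apply: mulr_ln_le => //; apply: PQ.
have sum_supportP : \sum_(t | 0 < P t) P t = \sum_t P t.
  transitivity (\sum_t P t * 1); last by apply: eq_bigr => t _; rewrite mulr1.
  by rewrite -sum_support //; apply: eq_bigr => t _; rewrite mulr1.
rewrite sumrB sum_supportP lerD2r [leRHS](bigID (fun t => 0 < P t)) /=.
by rewrite lerDl sumr_ge0.
Qed.

End LogFacts.

Section ConditionalFunctional.
Variables (R : realType) (X Y : finType) (alpha : R).
Variables (pX : X -> R) (pYX : X -> Y -> R).
Hypotheses (alpha_gt1 : 1 < alpha) (pX_dist : is_dist pX).
Hypothesis pYX_chan : is_channel pYX.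

Definition joint (q : X -> Y -> R) (t : X * Y) : R := pX t.1 * q t.1 t.2.

(* [regular q r] says that [FC q r] is finite: [pX q] is absolutely continuous
   w.r.t. [pX pYX] and [r] does not vanish on its support. *)
Definition regular (q : X -> Y -> R) (r : Y -> X -> R) : Prop :=
  forall x y, 0 < pX x * q x y -> 0 < pYX x y /\ 0 < r y x.

Definition FCsum (q : X -> Y -> R) (r : Y -> X -> R) : R :=
  \sum_(t | 0 < joint q t) joint q t *
    (alpha / (1 - alpha) * ln (joint q t / joint pYX t) + ln (r t.2 t.1 / pX t.1)).

Lemma joint_ge0 (q : X -> Y -> R) : is_channel q -> forall t, 0 <= joint q t.
Proof.
by move=> q_chan t; apply: mulr_ge0; [apply: pX_dist.1 | apply: (q_chan _).1].
Qed.

Lemma joint_gt0 (q : X -> Y -> R) x y : is_channel q ->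
  0 < pX x * q x y -> 0 < pX x /\ 0 < q x y.
Proof.
by move=> q_chan; rewrite nneg_mulr_gt0 ?pX_dist.1 ?(q_chan x).1 // => /andP.
Qed.

Lemma sum_joint (q : X -> Y -> R) (f : X -> R) : is_channel q ->
  \sum_t joint q t * f t.1 = \sum_x pX x * f x.
Proof.
move=> q_chan; rewrite -(pair_bigA _ (fun x y => joint q (x, y) * f x)) /=.
apply: eq_bigr => x _.
by rewrite /joint /= -big_distrl -big_distrr /= (q_chan x).2 mulr1.
Qed.

Lemma sum_joint_support (q : X -> Y -> R) (f : X -> R) : is_channel q ->
  \sum_(t | 0 < joint q t) joint q t * f t.1 = \sum_x pX x * f x.
Proof. by move=> q_chan; rewrite sum_support ?sum_joint //; apply: joint_ge0. Qed.

Lemma sum_joint1 (q : X -> Y -> R) : is_channel q -> \sum_t joint q t = 1.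
Proof.
move=> q_chan; rewrite -pX_dist.2.
transitivity (\sum_t joint q t * 1); first by apply: eq_bigr => t _; rewrite mulr1.
transitivity (\sum_x pX x * 1); last by apply: eq_bigr => t _; rewrite mulr1.
exact: (sum_joint (fun=> 1)).
Qed.

Lemma FC_regularE (q : X -> Y -> R) (r : Y -> X -> R) : is_channel q ->
  regular q r -> FC alpha pX pYX q r = (FCsum q r)%:E.
Proof.
move=> q_chan reg; rewrite /FC /KL /Elog /=.
have pos x y : 0 < pX x * q x y -> [/\ 0 < pX x, 0 < pYX x y & 0 < r y x].
  by move=> j0; have [? _] := joint_gt0 q_chan j0; have [] := reg x y j0.
case: asboolP => [[[x y] /= [j0 /eqP]]|_].
  by have [? ? _] := pos x y j0; rewrite mulf_eq0 !gt_eqF.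
case: asboolP => [[[x y] /= [j0 /eqP]]|_].
  by have [? _ ?] := pos x y j0; rewrite mulf_eq0 invr_eq0 !gt_eqF.
rewrite -EFinM -EFinD mulr_sumr -big_split /=; congr (_%:E).
by apply: eq_bigr => t _; rewrite /joint; ring.
Qed.

Lemma FC_not_regular (q : X -> Y -> R) (r : Y -> X -> R) : is_rev_channel r ->
  ~ regular q r -> FC alpha pX pYX q r = -oo%E.
Proof.
move=> r_rev nreg; have c_lt0 : alpha / (1 - alpha) < 0.
  by rewrite pmulr_rlt0 ?(lt_trans ltr01) // invr_lt0 subr_lt0.
rewrite /FC /KL /Elog /=; case: asboolP => [_|nKL].
  by rewrite mulry ltr0_sg // mulN1e; case: asboolP.
case: asboolP => [_|nElog]; first by rewrite addeNy.
exfalso; apply: nreg => x y j0; rewrite !lt0r (pYX_chan x).1 (r_rev y).1 !andbT.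
split; apply/eqP => e0; [apply: nKL | apply: nElog]; exists (x, y).
  by rewrite /= e0 mulr0.
by rewrite /= e0 mul0r.
Qed.

Lemma FC_le (q q' : X -> Y -> R) (r r' : Y -> X -> R) :
  is_channel q -> is_rev_channel r -> is_channel q' ->
  (regular q r -> regular q' r' /\ FCsum q r <= FCsum q' r') ->
  (FC alpha pX pYX q r <= FC alpha pX pYX q' r')%E.
Proof.
move=> q_chan r_rev q'_chan impl.
have [reg|nreg] := pselect (regular q r); last by rewrite FC_not_regular ?leNye.
by have [reg' le] := impl reg; rewrite !FC_regularE // lee_fin.
Qed.

Definition marginal (q : X -> Y -> R) (y : Y) : R := \sum_x pX x * q x y.

Section OptimalReverseChannel.
Variables (q : X -> Y -> R) (rs : Y -> X -> R).
Hypothesis q_chan : is_channel q.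
Hypothesis rsE : forall y x, marginal q y != 0 ->
  rs y x = pX x * q x y / marginal q y.

Lemma marginal_gt0 x y : 0 < pX x * q x y -> 0 < marginal q y.
Proof.
move=> j0; apply: lt_le_trans j0 _.
apply: (ler_sum_term (F := fun x' => pX x' * q x' y)) => x'.
exact: (joint_ge0 q_chan (x', y)).
Qed.

Lemma rstar_gt0 x y : 0 < pX x * q x y -> 0 < rs y x.
Proof.
move=> j0; have m0 := marginal_gt0 j0.
by rewrite rsE ?gt_eqF // divr_gt0.
Qed.

Lemma regular_rstar r : regular q r -> regular q rs.
Proof. by move=> reg x y j0; split; [apply: (reg x y j0).1 | apply: rstar_gt0]. Qed.

Lemma FCsum_rstar_ge r : is_rev_channel r -> regular q r ->
  FCsum q r <= FCsum q rs.
Proof.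
move=> r_rev reg; pose Q t := marginal q t.2 * r t.2 t.1.
have Q0 t : 0 <= Q t.
  apply: mulr_ge0; last exact: (r_rev _).1.
  by apply: sumr_ge0 => x _; apply: (joint_ge0 q_chan (x, t.2)).
have jQ t : 0 < joint q t -> 0 < Q t.
  by case: t => x y j0; rewrite mulr_gt0 ?(marginal_gt0 j0) ?(reg x y j0).2.
have sumQ : \sum_t Q t = 1.
  rewrite -(pair_bigA _ (fun x y => Q (x, y))) /= exchange_big /=.
  rewrite -(sum_joint1 q_chan) -(pair_bigA _ (fun x y => joint q (x, y))).
  rewrite exchange_big /=; apply: eq_bigr => y _.
  by rewrite /Q /= -big_distrr /= (r_rev y).2 mulr1.
have := gibbs (joint_ge0 q_chan) Q0 jQ; rewrite sumQ sum_joint1 // subrr.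
suff -> : FCsum q r = FCsum q rs +
    \sum_(t | 0 < joint q t) joint q t * ln (Q t / joint q t) by rewrite gerDl.
rewrite /FCsum -big_split /=; apply: eq_bigr => -[x y] j0 /=.
have [pX0 q0] := joint_gt0 q_chan j0; have [pYX0 r0] := reg x y j0.
have m0 := marginal_gt0 j0; rewrite rsE ?gt_eqF // /Q /joint /=.
by rewrite !ln_div ?lnM ?posrE ?mulr_gt0 ?divr_gt0 ?invr_gt0 //; ring.
Qed.

End OptimalReverseChannel.

Definition tilt_norm (r : Y -> X -> R) (x : X) : R :=
  \sum_y pYX x y * powR (r y x) (1 - alpha^-1).

Section OptimalChannel.
Variables (r : Y -> X -> R) (qs : X -> Y -> R).
Hypotheses (r_rev : is_rev_channel r) (qs_chan : is_channel qs).
Hypothesis qsE : forall x y, tilt_norm r x != 0 ->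
  qs x y = pYX x y * powR (r y x) (1 - alpha^-1) / tilt_norm r x.

Lemma tilt_norm_gt0 (q : X -> Y -> R) x : is_channel q -> regular q r ->
  0 < pX x -> 0 < tilt_norm r x.
Proof.
move=> q_chan reg pX0.
have : \sum_y q x y <> 0 by rewrite (q_chan x).2; apply/eqP; exact: oner_neq0.
case/(psumr_neq0P (fun y _ => (q_chan x).1 y)) => y /andP[_ q0].
have [pYX0 r0] := reg x y (mulr_gt0 pX0 q0).
apply: lt_le_trans (ler_sum_term (F := fun y => pYX x y * powR (r y x) _) y _).
  by rewrite mulr_gt0 ?powR_gt0.
by move=> y'; rewrite mulr_ge0 ?powR_ge0 ?(pYX_chan x).1.
Qed.

Lemma qstar_gt0 (q : X -> Y -> R) x y : is_channel q -> regular q r ->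
  0 < pX x * q x y -> 0 < qs x y.
Proof.
move=> q_chan reg j0; have [pX0 _] := joint_gt0 q_chan j0.
have [pYX0 r0] := reg x y j0; have Z0 := tilt_norm_gt0 q_chan reg pX0.
by rewrite qsE ?gt_eqF // divr_gt0 ?mulr_gt0 ?powR_gt0.
Qed.

Lemma regular_qstar (q : X -> Y -> R) : is_channel q -> regular q r ->
  regular qs r.
Proof.
move=> q_chan reg x y j0; have [pX0 qs0] := joint_gt0 qs_chan j0.
have Z0 := tilt_norm_gt0 q_chan reg pX0.
have a0 : 0 < 1 - alpha^-1 by rewrite subr_gt0 invf_lt1 // (lt_trans ltr01).
move: qs0; rewrite qsE ?gt_eqF // pmulr_lgt0 ?invr_gt0 //.
rewrite nneg_mulr_gt0 ?(pYX_chan x).1 ?powR_ge0 // => /andP[-> ].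
by move/(gt0_powR a0 ((r_rev y).1 x)).
Qed.

Lemma FCsum_qstar_ge (q : X -> Y -> R) : is_channel q -> regular q r ->
  FCsum q r <= FCsum qs r.
Proof.
move=> q_chan reg.
pose g x := alpha / (alpha - 1) * ln (tilt_norm r x) - ln (pX x).
have -> : FCsum qs r = \sum_x pX x * g x.
  rewrite /FCsum -(sum_joint_support g qs_chan).
  apply: eq_bigr => -[x y] j0 /=.
  have [pX0 qs0] := joint_gt0 qs_chan j0.
  have [pYX0 r0] := regular_qstar q_chan reg j0.
  have Z0 := tilt_norm_gt0 q_chan reg pX0.
  rewrite /joint /= (tilted_log_ratio alpha_gt1 pX0 qs0 pYX0 r0 Z0).
  by rewrite -qsE ?gt_eqF // divff ?ln1 ?add0r // mulf_neq0 ?gt_eqF.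
have -> : FCsum q r = alpha / (alpha - 1) *
    \sum_(t | 0 < joint q t) joint q t * ln (joint qs t / joint q t) +
    \sum_x pX x * g x.
  rewrite -(sum_joint_support g q_chan) mulr_sumr -big_split /=.
  apply: eq_bigr => -[x y] j0 /=.
  have [pX0 q0] := joint_gt0 q_chan j0; have [pYX0 r0] := reg x y j0.
  have Z0 := tilt_norm_gt0 q_chan reg pX0.
  rewrite /joint /= (tilted_log_ratio alpha_gt1 pX0 q0 pYX0 r0 Z0).
  by rewrite -qsE ?gt_eqF // /g /=; ring.
rewrite gerDr pmulr_rle0 ?divr_gt0 ?subr_gt0 ?(lt_trans ltr01) //.
have jqs t : 0 < joint q t -> 0 < joint qs t.
  case: t => x y j0; have [pX0 _] := joint_gt0 q_chan j0.
  by rewrite /joint mulr_gt0 ?(qstar_gt0 q_chan reg j0).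
have := gibbs (joint_ge0 q_chan) (joint_ge0 qs_chan) jqs.
by rewrite !sum_joint1 // subrr.
Qed.

End OptimalChannel.

End ConditionalFunctional.

Theorem proposition3 (R : realType) (X Y : finType) (alpha : R)
  (pX : X -> R) (pYX : X -> Y -> R) :
  1 < alpha -> is_dist pX -> is_channel pYX ->
  (* (1) optimal reverse channel for fixed q *)
  (forall (q : X -> Y -> R) (rstar : Y -> X -> R),
     is_channel q -> is_rev_channel rstar ->
     (forall y x, \sum_(x' : X) pX x' * q x' y != 0 ->
        rstar y x = pX x * q x y / \sum_(x' : X) pX x' * q x' y) ->
     forall r : Y -> X -> R, is_rev_channel r ->
       (FC alpha pX pYX q r <= FC alpha pX pYX q rstar)%E) /\
  (* (2) optimal channel for fixed r *)
  (forall (r : Y -> X -> R) (qstar : X -> Y -> R),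
     is_rev_channel r -> is_channel qstar ->
     (forall x y, \sum_(y' : Y) pYX x y' * powR (r y' x) (1 - alpha^-1) != 0 ->
        qstar x y = pYX x y * powR (r y x) (1 - alpha^-1)
                    / \sum_(y' : Y) pYX x y' * powR (r y' x) (1 - alpha^-1)) ->
     forall q : X -> Y -> R, is_channel q ->
       (FC alpha pX pYX q r <= FC alpha pX pYX qstar r)%E).
Proof.
move=> alpha_gt1 pX_dist pYX_chan; split.
- move=> q rs q_chan _ rsE r r_rev; apply: FC_le => // reg; split.
    exact: (regular_rstar pX_dist q_chan rsE reg).
  exact: (FCsum_rstar_ge alpha pX_dist q_chan rsE r_rev reg).
- move=> r qs r_rev qs_chan qsE q q_chan; apply: FC_le => // reg; split.
    exact: (regular_qstar alpha_gt1 pX_dist pYX_chan r_rev qs_chan qsE q_chan).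
  exact: (FCsum_qstar_ge alpha_gt1 pX_dist pYX_chan r_rev qs_chan qsE q_chan).
Qed.
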